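(* Let $\varphi$ be a quantifier-free first-order formula in the language $\sigma^{bdbo}_=$. Then $\varphi$ is satisfiable in some bdbo if and only if $\varphi$ is satisfiable in some brdg (regarding $\varphi$ as a $\sigma^{brdg}_=$-formula).
   Context: A bdbo is an algebra $\langle A,\wedge,\vee,\circ,0,1,\leqslant\rangle$ where $\langle A,\wedge,\vee,0,1\rangle$ is a bounded distributive lattice with natural order $\leqslant$ and $\circ$ is a binary operation with $x\circ0=0=0\circ x$, $x\circ(y\vee z)=(x\circ y)\vee(x\circ z)$, $(y\vee z)\circ x=(y\circ x)\vee(z\circ x)$; $\sigma^{bdbo}_=$ is its language (symbols $\wedge,\vee,\circ,0,1,\leqslant$) with equality. A brdg is an algebra $\langle A,\wedge,\vee,\circ,\backslash,/,0,1,\leqslant\rangle$ where $\langle A,\wedge,\vee,0,1\rangle$ is a bounded distributive lattice with natural order $\leqslant$ and $\circ,\backslash,/$ are binary operations such that $x\circ y\leqslant z\iff y\leqslant x\backslash z\iff x\leqslant z/y$; $\sigma^{brdg}_=$ is its language with equality. A quantifier-free first-order formula is a Boolean combination of atomic formulas $s=t$, $s\leqslant t$; it is satisfiable in an algebra if it is true there under some valuation of its variables. *)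

Record bdl_axioms (A : Type) (meet join : A -> A -> A) (zero one : A) : Prop := {
  meetA : forall x y z, meet x (meet y z) = meet (meet x y) z;
  joinA : forall x y z, join x (join y z) = join (join x y) z;
  meetC : forall x y, meet x y = meet y x;
  joinC : forall x y, join x y = join y x;
  meet_absorb : forall x y, meet x (join x y) = x;
  join_absorb : forall x y, join x (meet x y) = x;
  meet_distr : forall x y z, meet x (join y z) = join (meet x y) (meet x z);
  join0x : forall x, join zero x = x;
  meet1x : forall x, meet one x = x
}.

Definition nat_le {A : Type} (meet : A -> A -> A) (x y : A) : Prop := meet x y = x.

Record bdbo : Type := {
  bdbo_car :> Type;
  bdbo_meet : bdbo_car -> bdbo_car -> bdbo_car;
  bdbo_join : bdbo_car -> bdbo_car -> bdbo_car;
  bdbo_comp : bdbo_car -> bdbo_car -> bdbo_car;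
  bdbo_zero : bdbo_car;
  bdbo_one : bdbo_car;
  bdbo_lat : bdl_axioms bdbo_car bdbo_meet bdbo_join bdbo_zero bdbo_one;
  bdbo_comp0r : forall x, bdbo_comp x bdbo_zero = bdbo_zero;
  bdbo_comp0l : forall x, bdbo_comp bdbo_zero x = bdbo_zero;
  bdbo_compDr : forall x y z,
      bdbo_comp x (bdbo_join y z) = bdbo_join (bdbo_comp x y) (bdbo_comp x z);
  bdbo_compDl : forall x y z,
      bdbo_comp (bdbo_join y z) x = bdbo_join (bdbo_comp y x) (bdbo_comp z x)
}.

Record brdg : Type := {
  brdg_car :> Type;
  brdg_meet : brdg_car -> brdg_car -> brdg_car;
  brdg_join : brdg_car -> brdg_car -> brdg_car;
  brdg_comp : brdg_car -> brdg_car -> brdg_car;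
  brdg_ldiv : brdg_car -> brdg_car -> brdg_car;
  brdg_rdiv : brdg_car -> brdg_car -> brdg_car;
  brdg_zero : brdg_car;
  brdg_one : brdg_car;
  brdg_lat : bdl_axioms brdg_car brdg_meet brdg_join brdg_zero brdg_one;
  brdg_res1 : forall x y z,
      nat_le brdg_meet (brdg_comp x y) z <-> nat_le brdg_meet y (brdg_ldiv x z);
  brdg_res2 : forall x y z,
      nat_le brdg_meet y (brdg_ldiv x z) <-> nat_le brdg_meet x (brdg_rdiv z y)
}.

Inductive term : Type :=
  | tVar : nat -> term
  | tMeet : term -> term -> term
  | tJoin : term -> term -> term
  | tComp : term -> term -> term
  | tZero : term
  | tOne : term.

Inductive qf_formula : Type :=
  | fEq : term -> term -> qf_formula
  | fLe : term -> term -> qf_formula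
  | fTrue : qf_formula
  | fFalse : qf_formula
  | fNot : qf_formula -> qf_formula
  | fAnd : qf_formula -> qf_formula -> qf_formula
  | fOr : qf_formula -> qf_formula -> qf_formula
  | fImp : qf_formula -> qf_formula -> qf_formula.

Fixpoint eval_term {A : Type} (meet join comp : A -> A -> A) (zero one : A)
    (v : nat -> A) (t : term) : A :=
  match t with
  | tVar n => v n
  | tMeet s u => meet (eval_term meet join comp zero one v s)
                      (eval_term meet join comp zero one v u)
  | tJoin s u => join (eval_term meet join comp zero one v s)
                      (eval_term meet join comp zero one v u)
  | tComp s u => comp (eval_term meet join comp zero one v s)
                      (eval_term meet join comp zero one v u)
  | tZero => zero
  | tOne => one
  end.

Fixpoint holds {A : Type} (meet join comp : A -> A -> A) (zero one : A)
    (v : nat -> A) (f : qf_formula) : Prop :=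
  match f with
  | fEq s t => eval_term meet join comp zero one v s
               = eval_term meet join comp zero one v t
  | fLe s t => nat_le meet (eval_term meet join comp zero one v s)
                           (eval_term meet join comp zero one v t)
  | fTrue => True
  | fFalse => False
  | fNot g => ~ holds meet join comp zero one v g
  | fAnd g h => holds meet join comp zero one v g /\ holds meet join comp zero one v h
  | fOr g h => holds meet join comp zero one v g \/ holds meet join comp zero one v h
  | fImp g h => holds meet join comp zero one v g -> holds meet join comp zero one v h
  end.

Definition sat_bdbo (A : bdbo) (f : qf_formula) : Prop :=
  exists v : nat -> A,
    holds (bdbo_meet A) (bdbo_join A) (bdbo_comp A) (bdbo_zero A) (bdbo_one A) v f.

(** A sigma^bdbo formula read as a sigma^brdg formula: the symbols
    /\, \/, o, 0, 1, <= are interpreted by the brdg's own operations. *)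
Definition sat_brdg (B : brdg) (f : qf_formula) : Prop :=
  exists v : nat -> B,
    holds (brdg_meet B) (brdg_join B) (brdg_comp B) (brdg_zero B) (brdg_one B) v f.

(** A brdg is already a bdbo, since residuated operations preserve all existing
    joins, in particular 0 and binary joins.  Conversely, the ideals of a bdbo
    [A] form a brdg, with [I o J] the ideal generated by the products [i o j] and
    the residuals [I \ K = {y | forall i in I, i o y in K}] and
    [K / J = {x | forall j in J, x o j in K}].  The map sending [a] to its
    principal ideal is an injective homomorphism of bdbos, and quantifier-free
    formulas are preserved and reflected by injective homomorphisms, because
    [x <= y] is the equation [x /\ y = x]. *)

From Stdlib Require Import FunctionalExtensionality PropExtensionality ProofIrrelevance.

#[local] Arguments meetA {A meet join zero one} _ _ _ _.
#[local] Arguments joinA {A meet join zero one} _ _ _ _.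
#[local] Arguments meetC {A meet join zero one} _ _ _.
#[local] Arguments joinC {A meet join zero one} _ _ _.
#[local] Arguments meet_absorb {A meet join zero one} _ _ _.
#[local] Arguments join_absorb {A meet join zero one} _ _ _.
#[local] Arguments meet_distr {A meet join zero one} _ _ _ _.
#[local] Arguments join0x {A meet join zero one} _ _.
#[local] Arguments meet1x {A meet join zero one} _ _.

Section BoundedDistributiveLattice.

Context {A : Type} {meet join : A -> A -> A} {zero one : A}.
Hypothesis L : bdl_axioms A meet join zero one.
Local Notation le := (nat_le meet).

Lemma meet_idem x : meet x x = x.
Proof.
  pose proof (meet_absorb L x (meet x x)) as E.
  rewrite (join_absorb L) in E. exact E.
Qed.

Lemma le_refl x : le x x.
Proof. apply meet_idem. Qed.

Lemma le_antisym x y : le x y -> le y x -> x = y.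
Proof.
  unfold nat_le; intros hxy hyx.
  rewrite <- hxy, (meetC L). exact hyx.
Qed.

Lemma le_trans x y z : le x y -> le y z -> le x z.
Proof.
  unfold nat_le; intros hxy hyz.
  rewrite <- hxy, <- (meetA L), hyz. reflexivity.
Qed.

Lemma le_join_l x y : le x (join x y).
Proof. apply (meet_absorb L). Qed.

Lemma le_join_r x y : le y (join x y).
Proof. rewrite (joinC L). apply le_join_l. Qed.

Lemma join_le x y z : le (join x y) z <-> le x z /\ le y z.
Proof.
  split.
  - intro h; split; eapply le_trans; [apply le_join_l | exact h | apply le_join_r | exact h].
  - unfold nat_le; intros [hx hy].
    rewrite (meetC L), (meet_distr L), (meetC L z x), (meetC L z y), hx, hy.
    reflexivity.
Qed.

Lemma le_meet x y z : le z (meet x y) <-> le z x /\ le z y.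
Proof.
  assert (hl : forall a b, le (meet a b) a).
  { intros a b. unfold nat_le.
    rewrite (meetC L), (meetA L), meet_idem. reflexivity. }
  split.
  - intro h; split; eapply le_trans; eauto.
    rewrite (meetC L). apply hl.
  - unfold nat_le; intros [hx hy]. rewrite (meetA L), hx. exact hy.
Qed.

Lemma le0 x : le zero x.
Proof. unfold nat_le. rewrite <- (join0x L x) at 1. apply (meet_absorb L). Qed.

Lemma le1 x : le x one.
Proof. unfold nat_le. rewrite (meetC L). apply (meet1x L). Qed.

Lemma join_mono a b c d : le a c -> le b d -> le (join a b) (join c d).
Proof.
  intros hac hbd. apply join_le; split; eapply le_trans;
    eauto using le_join_l, le_join_r.
Qed.

Lemma join_r_of_le x y : le x y -> join x y = y.
Proof.
  unfold nat_le; intro h. rewrite <- h, (joinC L), (meetC L). apply (join_absorb L).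
Qed.

Lemma eq_of_same_upper_bounds a b : (forall w, le a w <-> le b w) -> a = b.
Proof. intro h. apply le_antisym; [apply h | apply h]; apply le_refl. Qed.

End BoundedDistributiveLattice.

Section BrdgReduct.

Variable B : brdg.
Local Notation L := (brdg_lat B).
Local Notation le := (nat_le (brdg_meet B)).
Local Notation join := (brdg_join B).
Local Notation comp := (brdg_comp B).
Local Notation zero := (brdg_zero B).

Lemma brdg_res_rdiv x y z : le (comp x y) z <-> le x (brdg_rdiv B z y).
Proof. rewrite brdg_res1. apply brdg_res2. Qed.

Lemma brdg_comp0r x : comp x zero = zero.
Proof. apply (le_antisym L); [apply brdg_res1 | ]; apply (le0 L). Qed.

Lemma brdg_comp0l x : comp zero x = zero.
Proof. apply (le_antisym L); [apply brdg_res_rdiv | ]; apply (le0 L). Qed.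

Lemma brdg_compDr x y z : comp x (join y z) = join (comp x y) (comp x z).
Proof.
  apply (eq_of_same_upper_bounds L); intro w.
  rewrite brdg_res1, !(join_le L), !brdg_res1. reflexivity.
Qed.

Lemma brdg_compDl x y z : comp (join y z) x = join (comp y x) (comp z x).
Proof.
  apply (eq_of_same_upper_bounds L); intro w.
  rewrite brdg_res_rdiv, !(join_le L), !brdg_res_rdiv. reflexivity.
Qed.

Definition bdbo_of_brdg : bdbo :=
  {| bdbo_lat := L;
     bdbo_comp0r := brdg_comp0r; bdbo_comp0l := brdg_comp0l;
     bdbo_compDr := brdg_compDr; bdbo_compDl := brdg_compDl |}.

End BrdgReduct.

Section Embedding.

Context {A B : Type} {mA jA cA : A -> A -> A} {zA oA : A}
  {mB jB cB : B -> B -> B} {zB oB : B} {f : A -> B}.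
Hypothesis f_meet : forall x y, f (mA x y) = mB (f x) (f y).
Hypothesis f_join : forall x y, f (jA x y) = jB (f x) (f y).
Hypothesis f_comp : forall x y, f (cA x y) = cB (f x) (f y).
Hypothesis f_zero : f zA = zB.
Hypothesis f_one : f oA = oB.
Hypothesis f_inj : forall x y, f x = f y -> x = y.

Lemma eval_term_hom (v : nat -> A) t :
  eval_term mB jB cB zB oB (fun n => f (v n)) t = f (eval_term mA jA cA zA oA v t).
Proof.
  induction t; simpl; rewrite ?IHt1, ?IHt2;
    rewrite ?f_meet, ?f_join, ?f_comp, ?f_zero, ?f_one; reflexivity.
Qed.

Lemma holds_embedding (v : nat -> A) phi :
  holds mB jB cB zB oB (fun n => f (v n)) phi <-> holds mA jA cA zA oA v phi.
Proof.
  induction phi; simpl; unfold nat_le; rewrite ?eval_term_hom, <- ?f_meet; try tauto;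
    split; auto using f_equal.
Qed.

End Embedding.

Section IdealCompletion.

Variable A : bdbo.
Local Notation L := (bdbo_lat A).
Local Notation le := (nat_le (bdbo_meet A)).
Local Notation meet := (bdbo_meet A).
Local Notation join := (bdbo_join A).
Local Notation comp := (bdbo_comp A).
Local Notation zero := (bdbo_zero A).
Local Notation one := (bdbo_one A).

Lemma comp_mono a b c d : le a c -> le b d -> le (comp a b) (comp c d).
Proof.
  intros hac hbd. apply (le_trans L) with (y := comp c b).
  - rewrite <- (join_r_of_le L a c hac), bdbo_compDl. apply (le_join_l L).
  - rewrite <- (join_r_of_le L b d hbd), bdbo_compDr. apply (le_join_l L).
Qed.

Record ideal : Type := {
  mem : A -> Prop;
  mem0 : mem zero;
  mem_down : forall x y, le x y -> mem y -> mem x;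
  mem_join : forall x y, mem x -> mem y -> mem (join x y)
}.

Lemma ideal_ext (I J : ideal) : (forall x, mem I x <-> mem J x) -> I = J.
Proof.
  destruct I as [p p0 pdown pjoin], J as [q q0 qdown qjoin]; simpl; intro h.
  assert (p = q) as <-.
  { extensionality x. apply propositional_extensionality, h. }
  f_equal; apply proof_irrelevance.
Qed.

Definition principal (a : A) : ideal.
Proof.
  refine {| mem x := le x a |}.
  - apply (le0 L).
  - intros x y; apply (le_trans L).
  - intros x y hx hy. apply (join_le L); split; assumption.
Defined.

Definition ideal_top : ideal :=
  {| mem _ := True; mem0 := I; mem_down _ _ _ _ := I; mem_join _ _ _ _ := I |}.

Definition ideal_meet (I J : ideal) : ideal.
Proof.
  refine {| mem x := mem I x /\ mem J x |}.
  - split; apply mem0.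
  - intros x y h [hI hJ]; split; eapply mem_down; eassumption.
  - intros x y [hxI hxJ] [hyI hyJ]; split; apply mem_join; assumption.
Defined.

Section GeneratedIdeal.

Variable op : A -> A -> A.
Hypothesis op_mono : forall a b c d, le a c -> le b d -> le (op a b) (op c d).

Definition ideal_op (I J : ideal) : ideal.
Proof.
  refine {| mem x := exists i j, mem I i /\ mem J j /\ le x (op i j) |}.
  - exists zero, zero. repeat split; try apply mem0. apply (le0 L).
  - intros x y hxy (i & j & hi & hj & hy). exists i, j.
    repeat split; try assumption. eapply (le_trans L); eassumption.
  - intros x y (i & j & hi & hj & hx) (i' & j' & hi' & hj' & hy).
    exists (join i i'), (join j j'). repeat split; try (apply mem_join; assumption).
    apply (join_le L); split; eapply (le_trans L); try eassumption;
      apply op_mono; apply (le_join_l L) || apply (le_join_r L).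
Defined.

Lemma principal_op a b : principal (op a b) = ideal_op (principal a) (principal b).
Proof.
  apply ideal_ext; intro x; simpl. split.
  - intro h. exists a, b. repeat split; try assumption; apply (le_refl L).
  - intros (i & j & hi & hj & h). eapply (le_trans L); [exact h | ].
    apply op_mono; assumption.
Qed.

End GeneratedIdeal.

Definition ideal_join := ideal_op join (join_mono L).
Definition ideal_comp := ideal_op comp comp_mono.

Definition ideal_ldiv (I K : ideal) : ideal.
Proof.
  refine {| mem y := forall i, mem I i -> mem K (comp i y) |}.
  - intros i _. rewrite bdbo_comp0r. apply mem0.
  - intros x y hxy hy i hi.
    eapply mem_down; [apply comp_mono; [apply (le_refl L) | exact hxy] | auto].
  - intros x y hx hy i hi. rewrite bdbo_compDr. apply mem_join; auto.
Defined.

Definition ideal_rdiv (K J : ideal) : ideal.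
Proof.
  refine {| mem x := forall j, mem J j -> mem K (comp x j) |}.
  - intros j _. rewrite bdbo_comp0l. apply mem0.
  - intros x y hxy hy j hj.
    eapply mem_down; [apply comp_mono; [exact hxy | apply (le_refl L)] | auto].
  - intros x y hx hy j hj. rewrite bdbo_compDl. apply mem_join; auto.
Defined.

Lemma ideal_le (I J : ideal) :
  nat_le ideal_meet I J <-> (forall x, mem I x -> mem J x).
Proof.
  unfold nat_le. split.
  - intros <- x hx. apply hx.
  - intro h. apply ideal_ext; simpl. intuition.
Qed.

Lemma mem_ideal_join_l (I J : ideal) x : mem I x -> mem (ideal_join I J) x.
Proof.
  intro hx. exists x, zero. repeat split; auto using mem0. apply (le_join_l L).
Qed.

Lemma mem_ideal_join_r (I J : ideal) x : mem J x -> mem (ideal_join I J) x.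
Proof.
  intro hx. exists zero, x. repeat split; auto using mem0. apply (le_join_r L).
Qed.

Lemma ideal_joinA (I J K : ideal) :
  ideal_join I (ideal_join J K) = ideal_join (ideal_join I J) K.
Proof.
  apply ideal_ext; intro w; split.
  - intros (i & m & hi & (j & k & hj & hk & hm) & hw).
    exists (join i j), k. repeat split; auto.
    + exists i, j. repeat split; auto. apply (le_refl L).
    + eapply (le_trans L); [exact hw | ]. rewrite <- (joinA L).
      apply (join_mono L); [apply (le_refl L) | exact hm].
  - intros (m & k & (i & j & hi & hj & hm) & hk & hw).
    exists i, (join j k). repeat split; auto.
    + exists j, k. repeat split; auto. apply (le_refl L).
    + eapply (le_trans L); [exact hw | ]. rewrite (joinA L).
      apply (join_mono L); [exact hm | apply (le_refl L)].
Qed.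

Lemma ideal_meet_distr (I J K : ideal) :
  ideal_meet I (ideal_join J K) = ideal_join (ideal_meet I J) (ideal_meet I K).
Proof.
  apply ideal_ext; intro w; split.
  - intros [hw (j & k & hj & hk & h)].
    destruct (proj1 (le_meet L w j (meet w j)) (le_refl L _)) as [hjw hjj].
    destruct (proj1 (le_meet L w k (meet w k)) (le_refl L _)) as [hkw hkk].
    (* Since [w <= j \/ k], distributivity gives [w = (w /\ j) \/ (w /\ k)]. *)
    exists (meet w j), (meet w k). repeat split.
    + exact (mem_down I _ _ hjw hw).
    + exact (mem_down J _ _ hjj hj).
    + exact (mem_down I _ _ hkw hw).
    + exact (mem_down K _ _ hkk hk).
    + rewrite <- (meet_distr L). apply (le_meet L). split; [apply (le_refl L) | exact h].
  - intros (i & j & [hiI hiJ] & [hjI hjK] & h). split.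
    + eapply mem_down; [exact h | ]. apply mem_join; assumption.
    + exists i, j. auto.
Qed.

Lemma ideal_lat : bdl_axioms ideal ideal_meet ideal_join (principal zero) ideal_top.
Proof.
  constructor; intros.
  - apply ideal_ext; simpl; tauto.
  - apply ideal_joinA.
  - apply ideal_ext; simpl; tauto.
  - apply ideal_ext; intro w; split; intros (i & j & hi & hj & h);
      exists j, i; rewrite (joinC L); auto.
  - apply ideal_ext; intro w; split; [intros [hw _] | intro hw]; auto.
    split; [exact hw | apply mem_ideal_join_l, hw].
  - apply ideal_ext; intro w; split; [ | apply mem_ideal_join_l].
    intros (i & j & hi & [hj _] & h). eapply mem_down; [exact h | ].
    apply mem_join; assumption.
  - apply ideal_meet_distr.
  - apply ideal_ext; intro w; split; [ | apply mem_ideal_join_r].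
    intros (i & j & hi & hj & h). eapply mem_down; [exact h | ].
    apply mem_join; [eapply mem_down; [exact hi | apply mem0] | exact hj].
  - apply ideal_ext; simpl; tauto.
Qed.

Lemma ideal_res_ldiv (I J K : ideal) :
  nat_le ideal_meet (ideal_comp I J) K <-> nat_le ideal_meet J (ideal_ldiv I K).
Proof.
  rewrite !ideal_le; simpl. split.
  - intros h y hy i hi. apply h. exists i, y. repeat split; auto. apply (le_refl L).
  - intros h x (i & j & hi & hj & hx). eapply mem_down; [exact hx | ]. auto.
Qed.

Lemma ideal_ldiv_rdiv (I J K : ideal) :
  nat_le ideal_meet J (ideal_ldiv I K) <-> nat_le ideal_meet I (ideal_rdiv K J).
Proof. rewrite !ideal_le; simpl. split; intros h a ha b hb; apply h; assumption. Qed.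

Definition brdg_of_bdbo : brdg :=
  {| brdg_lat := ideal_lat; brdg_res1 := ideal_res_ldiv; brdg_res2 := ideal_ldiv_rdiv |}.

Lemma principal_meet a b : principal (meet a b) = ideal_meet (principal a) (principal b).
Proof. apply ideal_ext; intro x. apply (le_meet L). Qed.

Lemma principal_one : principal one = ideal_top.
Proof. apply ideal_ext; intro x; simpl. split; auto. intros _. apply (le1 L). Qed.

Lemma principal_inj a b : principal a = principal b -> a = b.
Proof.
  intro e. apply (le_antisym L).
  - change (mem (principal b) a). rewrite <- e. apply (le_refl L).
  - change (mem (principal a) b). rewrite e. apply (le_refl L).
Qed.

Lemma holds_principal (v : nat -> A) phi :
  holds ideal_meet ideal_join ideal_comp (principal zero) ideal_top
    (fun n => principal (v n)) phi
  <-> holds meet join comp zero one v phi.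
Proof.
  exact (holds_embedding principal_meet (principal_op _ (join_mono L))
           (principal_op _ comp_mono) eq_refl principal_one principal_inj v phi).
Qed.

End IdealCompletion.

Theorem lemma5p2 (phi : qf_formula) :
  (exists A : bdbo, sat_bdbo A phi) <-> (exists B : brdg, sat_brdg B phi).
Proof.
  split.
  - intros [A [v hv]]. exists (brdg_of_bdbo A), (fun n => principal A (v n)).
    apply holds_principal. exact hv.
  - intros [B [v hv]]. exists (bdbo_of_brdg B), v. exact hv.
Qed.
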